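(* For all integers $m,n\ge 1$, $$P_{m-1} (n P_{n-1}-n P_{n}+P_{n})+P_{m} ((n+1) P_{n-1}+ 2 n P_{n}-(n-1) P_{n+1})+P_{m+1} ((n+1) P_{n}+n P_{n+1})= n (P_{m+n-1}+P_{m+n+1})+2 P_{m+n},$$ where $P_k$ denotes the $k$-th Pell number.
   Context: The Pell numbers are defined by $P_0=0$, $P_1=1$, $P_k=2P_{k-1}+P_{k-2}$ for $k\ge 2$. *)

From mathcomp Require Import all_boot all_algebra.
Import GRing.Theory.
Local Open Scope ring_scope.

Fixpoint pell (k : nat) : int :=
  match k with
  | 0 => 0
  | 1 => 1
  | (k'.+1 as k1).+1 => 2 * pell k1 + pell k'
  end.

From mathcomp Require Import all_boot all_algebra.
From mathcomp Require Import ring.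
Import GRing.Theory.
Local Open Scope ring_scope.

(* With m = a.+1 and n = b.+1, the addition formula
   P_{a+b+1} = P_{a+1} P_{b+1} + P_a P_b and the recurrence express every Pell
   number in the identity through P_a, P_{a+1}, P_b, P_{b+1}; what remains is a
   polynomial identity in these four values. *)

Lemma pellSS (k : nat) : pell k.+2 = 2 * pell k.+1 + pell k.
Proof. by []. Qed.

Lemma pellD (a b : nat) : pell (a + b).+1 = pell a.+1 * pell b.+1 + pell a * pell b.
Proof.
elim: b a => [|b IHb] a; first by rewrite addn0 /=; ring.
by rewrite -addSnnS IHb !pellSS; ring.
Qed.

Theorem proposition7p5 (m n : nat) (hm : (1 <= m)%N) (hn : (1 <= n)%N) :
  pell (m.-1) * (n%:Z * pell n.-1 - n%:Z * pell n + pell n)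
  + pell m * ((n%:Z + 1) * pell n.-1 + 2 * n%:Z * pell n - (n%:Z - 1) * pell n.+1)
  + pell m.+1 * ((n%:Z + 1) * pell n + n%:Z * pell n.+1)
  = n%:Z * (pell (m + n).-1 + pell (m + n).+1) + 2 * pell (m + n).
Proof.
case: m hm => // a _; case: n hn => // b _.
rewrite addSn !succnK [pell (_ + _).+2]pellSS pellD addnS pellD !pellSS.
ring.
Qed.
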